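(* Let $x^*\in\mathcal{X}$. If for every neighborhood $U$ of $x^*$ in $\mathcal{X}$ there is a solution $y_U(t)$ of $\dot y_k=v_k(Q(y))$, $k\in\mathcal{N}$, such that $x_U(t)=Q(y_U(t))\in U$ for all $t\ge0$, then $x^*$ is a Nash equilibrium.
   Context: Setting: finite game with players $\mathcal{N}$, action sets $\mathcal{A}_k$, mixed strategies $\mathcal{X}_k=\Delta(\mathcal{A}_k)$, $\mathcal{X}=\prod_k\mathcal{X}_k$, multilinear expected payoffs $u_k$, payoff vectors $v_k(x)=(u_k(\alpha;x_{-k}))_{\alpha\in\mathcal{A}_k}$. Each player has a penalty function $h_k$ on $\mathcal{X}_k$ (continuous, $C^\infty$ on relative interiors of faces, strongly convex: $h(tx_1+(1-t)x_2)\le th(x_1)+(1-t)h(x_2)-\tfrac12Kt(1-t)\|x_1-x_2\|^2$, $K>0$), with choice map $Q_k(y_k)=\arg\max_{x_k\in\mathcal{X}_k}\{\langle y_k,x_k\rangle-h_k(x_k)\}$; $Q=(Q_k)_k$. Nash equilibrium: $u_k(x^* )\ge u_k(x_k;x^*_{-k})$ for all $x_k\in\mathcal{X}_k$, $k\in\mathcal{N}$. *)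

From HB Require Import structures.
From mathcomp Require Import all_boot all_order all_algebra.
From mathcomp Require Import all_classical all_reals all_analysis.
Set Implicit Arguments. Unset Strict Implicit. Unset Printing Implicit Defensive.
Import Order.TTheory GRing.Theory Num.Theory.
Import numFieldNormedType.Exports.
Local Open Scope classical_set_scope.
Local Open Scope ring_scope.

Section Game.
Variables (R : realType) (I : finType) (n : I -> nat).
(* Player k has the finite action set 'I_(n k); a (mixed) strategy or a
   score vector of player k is a row vector in 'rV[R]_(n k). *)

Definition profile := forall k : I, 'rV[R]_(n k).
Definition pure_profile := {dffun forall k : I, 'I_(n k)}.

Definition simplex (m : nat) : set 'rV[R]_m :=
  [set x | (forall i, 0 <= x ord0 i) /\ \sum_i x ord0 i = 1].

Definition strat_space : set profile :=
  [set x | forall k, simplex (x k)].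

Definition inner (m : nat) (y x : 'rV[R]_m) : R := \sum_i y ord0 i * x ord0 i.

Definition exp_payoff (U : I -> pure_profile -> R) (k : I) (x : profile) : R :=
  \sum_(s : pure_profile) (\prod_(j : I) x j ord0 (s j)) * U k s.

Definition pure_strat (m : nat) (a : 'I_m) : 'rV[R]_m :=
  \row_b (a == b)%:R.

Definition deviate (x : profile) (k : I) (xk : 'rV[R]_(n k)) : profile :=
  @dfwith I (fun j => 'rV[R]_(n j)) x k xk.

Definition payoff_vec (U : I -> pure_profile -> R) (k : I) (x : profile)
  : 'rV[R]_(n k) :=
  \row_a exp_payoff U k (deviate x (pure_strat a)).

Definition is_Nash (U : I -> pure_profile -> R) (xs : profile) : Prop :=
  strat_space xs /\
  forall k (xk : 'rV[R]_(n k)), simplex xk ->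
    exp_payoff U k (deviate xs xk) <= exp_payoff U k xs.
End Game.

Fixpoint iter_dir_derive (R : realType) (m : nat)
    (f : 'rV[R]_m -> R) (ws : seq 'rV[R]_m) : 'rV[R]_m -> R :=
  match ws with
  | [::] => f
  | w :: ws' => fun x => 'D_w (iter_dir_derive f ws') x
  end.

Definition face_relint (R : realType) (m : nat) (S : {set 'I_m}) : set 'rV[R]_m :=
  [set x | simplex x /\ forall i, (0 < x ord0 i) <-> (i \in S)].

Definition face_tangent (R : realType) (m : nat) (S : {set 'I_m}) : set 'rV[R]_m :=
  [set w | (forall i, i \notin S -> w ord0 i = 0) /\ \sum_i w ord0 i = 0].

(* h is C^infty on the relative interior of every face of the simplex:
   all iterated directional derivatives along tangent directions exist
   there and are continuous there. *)
Definition smooth_on_faces (R : realType) (m : nat) (h : 'rV[R]_m -> R) : Prop :=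
  forall (S : {set 'I_m}) (ws : seq 'rV[R]_m),
    (forall w, w \in ws -> face_tangent S w) ->
    (forall x w, face_relint S x -> face_tangent S w ->
       derivable (iter_dir_derive h ws) x w) /\
    {within face_relint S, continuous (iter_dir_derive h ws)}.

(* Strong convexity of h on the simplex with modulus K (norm: the sup norm
   of 'rV[R]_m; all norms are equivalent in finite dimension). *)
Definition strongly_convex_on_simplex (R : realType) (m : nat)
    (h : 'rV[R]_m -> R) (K : R) : Prop :=
  forall (x1 x2 : 'rV[R]_m) (t : R), simplex x1 -> simplex x2 ->
    0 <= t <= 1 ->
    h (t *: x1 + (1 - t) *: x2) <=
      t * h x1 + (1 - t) * h x2 - 2^-1 * K * t * (1 - t) * `|x1 - x2| ^+ 2.

Definition penalty (R : realType) (m : nat) (h : 'rV[R]_m -> R) : Prop :=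
  {within simplex (R:=R) (m:=m), continuous h} /\
  smooth_on_faces h /\
  exists K : R, 0 < K /\ strongly_convex_on_simplex h K.

Definition is_choice_map (R : realType) (m : nat) (h : 'rV[R]_m -> R)
    (Q : 'rV[R]_m -> 'rV[R]_m) : Prop :=
  forall y, simplex (Q y) /\
    forall x, simplex x -> inner y x - h x <= inner y (Q y) - h (Q y).

(* Suppose x* is not a Nash equilibrium. Then some player k has pure actions
   a, b with x*_kb > 0 and v_ka > v_kb at x*; by continuity the same gap,
   halved, persists near x*. Along a trajectory staying near x*, the score
   difference y_ka - y_kb therefore grows at least linearly. On the other
   hand, Q_k(y_k) is near x*_k, so it still puts some mass d on b, and moving
   that mass from b to a cannot improve <y_k, x> - h_k(x); hence
   d (y_ka - y_kb) <= h_k(z) - h_k(Q_k(y_k)), which continuity of h_k at x*_k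
   keeps bounded. *)
From HB Require Import structures.
From mathcomp Require Import all_boot all_order all_algebra.
From mathcomp Require Import all_classical all_reals all_analysis.
From mathcomp Require Import ring lra.
Set Implicit Arguments. Unset Strict Implicit. Unset Printing Implicit Defensive.
Import Order.TTheory GRing.Theory Num.Theory.
Import numFieldNormedType.Exports.
Local Open Scope classical_set_scope.
Local Open Scope ring_scope.

Lemma simplex_ge0 (R : realType) m (x : 'rV[R]_m) i : simplex x -> 0 <= x ord0 i.
Proof. by case=> x_ge0 _; apply: x_ge0. Qed.

Lemma simplex_le1 (R : realType) m (x : 'rV[R]_m) i : simplex x -> x ord0 i <= 1.
Proof.
case=> x_ge0 x_sum1; rewrite -x_sum1 (bigD1 i) //= lerDl.
by apply: sumr_ge0 => j _; apply: x_ge0.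
Qed.

Lemma mx_norm_le (R : realType) m n (x : 'M[R]_(m, n)) (r : R) : 0 <= r ->
  (forall i j, `|x i j| <= r) -> `|x| <= r.
Proof.
move=> r_ge0 x_le; rewrite [leLHS]/Num.norm /= mx_normrE.
by apply/bigmax_leP; split => // -[i j] _ /=; apply: x_le.
Qed.

Lemma ler_entry_mx_norm (R : realType) m n (x : 'M[R]_(m, n)) i j :
  `|x i j| <= `|x|.
Proof.
rewrite [leRHS]/Num.norm /= mx_normrE.
by apply/bigmax_geP; right; exists (i, j).
Qed.

Lemma ler_norm_prodrB (R : numDomainType) (T : Type) (r : seq T) (a b : T -> R) :
  (forall i, 0 <= a i <= 1) -> (forall i, 0 <= b i <= 1) ->
  `|\prod_(i <- r) a i - \prod_(i <- r) b i| <= \sum_(i <- r) `|a i - b i|.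
Proof.
move=> a01 b01; elim: r => [|i r IH]; first by rewrite !big_nil subrr normr0.
rewrite !big_cons.
have /andP[ai_ge0 ai_le1] := a01 i; have /andP[bi_ge0 bi_le1] := b01 i.
have pa_ge0 : 0 <= \prod_(j <- r) a j by apply: prodr_ge0 => j _; case/andP: (a01 j).
have pa_le1 : \prod_(j <- r) a j <= 1 by apply: prodr_ile1 => j _; apply: a01.
have -> : a i * \prod_(j <- r) a j - b i * \prod_(j <- r) b j =
   (a i - b i) * \prod_(j <- r) a j + b i * (\prod_(j <- r) a j - \prod_(j <- r) b j)
  by ring.
apply: (le_trans (ler_normD _ _)); apply: lerD.
  by rewrite normrM (ger0_norm pa_ge0); apply: ler_piMr.
by rewrite normrM (ger0_norm bi_ge0) (le_trans _ IH) //; apply: ler_piMl.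
Qed.

Lemma within_continuous_dist (R : realType) m (h : 'rV[R]_m -> R)
    (A : set 'rV[R]_m) x :
  {within A, continuous h} -> A x -> forall e : R, 0 < e ->
  exists2 d : R, 0 < d & forall z, A z -> `|x - z| < d -> `|h x - h z| < e.
Proof.
move=> /subspace_continuousP /(_ x) h_cont Ax e e_gt0.
have /cvgrPdist_lt /(_ e e_gt0) := h_cont Ax.
rewrite near_withinE => /nbhs_ballP [d d_gt0 near_x].
by exists d => // z Az xz; apply: near_x => //; rewrite -ball_normE.
Qed.

Lemma is_derive_mx_coord (R : realType) m (f : R -> 'rV[R]_m) (t : R)
    (df : 'rV[R]_m) (i : 'I_m) :
  is_derive t 1 f df -> is_derive t 1 (fun s => f s ord0 i) (df ord0 i).
Proof.
move=> [f_der f_val].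
have quot_cvg : (fun h : R => h^-1 *: ((fun s => f s ord0 i) (h *: 1 + t) - f t ord0 i))
    @ 0^' --> df ord0 i.
  have /cvg_ex [l l_lim] := f_der.
  have l_df : 'D_1 f t = l by apply: cvg_lim.
  rewrite f_val in l_df; subst l.
  have := cvg_comp _ _ l_lim (@coord_continuous _ 1 m ord0 i df).
  apply: cvg_trans; apply: near_eq_cvg; near=> h.
  by rewrite /= !mxE.
apply: DeriveDef; first by apply/cvg_ex; exists (df ord0 i).
exact: cvg_lim.
Unshelve. all: by end_near.
Qed.

Lemma derive_ge_linear_growth (R : realType) (g g' : R -> R) (c : R) :
  {within [set t : R | 0 <= t], continuous g} ->
  (forall t : R, 0 < t -> is_derive t 1 g (g' t)) ->
  (forall t : R, 0 < t -> c <= g' t) ->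
  forall T : R, 0 < T -> g 0 + c * T <= g T.
Proof.
move=> g_cont g_der g'_ge T T_gt0.
have g_der_in t : t \in `]0, T[ -> is_derive t 1 g (g' t).
  by rewrite in_itv /= => /andP[t_gt0 _]; apply: g_der.
have g_cont_in : {within `[0, T], continuous g}.
  by apply: continuous_subspaceW g_cont => t /=; rewrite in_itv /= => /andP[].
have [t t_in g_mvt] := MVT T_gt0 g_der_in g_cont_in.
have t_gt0 : 0 < t by move: t_in; rewrite in_itv /= => /andP[].
have : c * T <= g' t * T by rewrite ler_wpM2r ?g'_ge // ltW.
by move: g_mvt; rewrite subr0; lra.
Qed.

Lemma coord_gap_unbounded (R : realType) m (y v : R -> 'rV[R]_m) a b (c : R) :
  0 < c -> {within [set t : R | 0 <= t], continuous y} ->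
  (forall t : R, 0 < t -> is_derive t 1 y (v t)) ->
  (forall t : R, 0 < t -> c <= v t ord0 a - v t ord0 b) ->
  forall B : R, exists2 T : R, 0 < T & B < y T ord0 a - y T ord0 b.
Proof.
move=> c_gt0 y_cont y_der v_gap B; pose g t := y t ord0 a - y t ord0 b.
have g_cont : {within [set t : R | 0 <= t], continuous g}.
  move=> t; apply: (@continuousB R _ (subspace [set t : R | 0 <= t])
                     (fun s => y s ord0 a) (fun s => y s ord0 b));
  exact: continuous_comp (y_cont t) (@coord_continuous _ 1 _ ord0 _ _).
have g_der (t : R) : 0 < t -> is_derive t 1 g (v t ord0 a - v t ord0 b).
  move=> t_gt0; exact: is_deriveB (is_derive_mx_coord a (y_der t t_gt0))
                                  (is_derive_mx_coord b (y_der t t_gt0)).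
pose T := (`|B - g 0| + 1) / c.
have T_gt0 : 0 < T by rewrite divr_gt0 // ltr_wpDl.
have cT : c * T = `|B - g 0| + 1 by rewrite /T mulrC divfK ?gt_eqF.
exists T => //; have := derive_ge_linear_growth g_cont g_der v_gap T_gt0.
by have := ler_norm (B - g 0); rewrite /g; lra.
Qed.

Definition mass_shift (R : realType) m (x : 'rV[R]_m) (a b : 'I_m) (d : R) :=
  x + d *: (pure_strat R a - pure_strat R b).

Lemma mass_shiftE (R : realType) m (x : 'rV[R]_m) a b d i :
  mass_shift x a b d ord0 i = x ord0 i + d * ((a == i)%:R - (b == i)%:R).
Proof. by rewrite !mxE. Qed.

Lemma sum_indicator (R : realType) m (a : 'I_m) : \sum_i ((a == i)%:R : R) = 1.
Proof.
rewrite (bigD1 a) //= eqxx big1 ?addr0 // => i /negbTE.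
by rewrite eq_sym => ->.
Qed.

Lemma sum_mul_indicator (R : realType) m (y : 'rV[R]_m) (a : 'I_m) :
  \sum_i y ord0 i * (a == i)%:R = y ord0 a.
Proof.
rewrite (bigD1 a) //= eqxx mulr1 big1 ?addr0 // => i /negbTE.
by rewrite eq_sym => ->; rewrite mulr0.
Qed.

Lemma simplex_pure_strat (R : realType) m (a : 'I_m) : simplex (pure_strat R a).
Proof.
split=> [i|]; first by rewrite mxE ler0n.
by under eq_bigr do rewrite mxE; rewrite sum_indicator.
Qed.

Lemma simplex_mass_shift (R : realType) m (x : 'rV[R]_m) a b d :
  simplex x -> a != b -> 0 <= d <= x ord0 b -> simplex (mass_shift x a b d).
Proof.
move=> x_simplex ab /andP[d_ge0 d_le]; split => [i|].
  rewrite mass_shiftE; have [<-|bi] := eqVneq b i.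
    by rewrite (negbTE ab) sub0r mulrN1 subr_ge0.
  by rewrite subr0 addr_ge0 ?mulr_ge0 ?ler0n // simplex_ge0.
under eq_bigr do rewrite mass_shiftE.
by rewrite big_split /= (proj2 x_simplex) -mulr_sumr sumrB !sum_indicator subrr mulr0 addr0.
Qed.

Lemma inner_mass_shift (R : realType) m (y x : 'rV[R]_m) a b d :
  inner y (mass_shift x a b d) = inner y x + d * (y ord0 a - y ord0 b).
Proof.
rewrite /inner; under eq_bigr do rewrite mass_shiftE mulrDr mulrCA.
rewrite big_split /= -mulr_sumr; congr (_ + _ * _).
under eq_bigr do rewrite mulrBr.
by rewrite sumrB !sum_mul_indicator.
Qed.

Lemma mx_norm_mass_shift_le (R : realType) m (x : 'rV[R]_m) a b d : 0 <= d ->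
  `|mass_shift x a b d - x| <= d.
Proof.
move=> d_ge0; rewrite /mass_shift addrC addKr normrZ ger0_norm //.
apply: ler_piMr => //; apply: mx_norm_le => // i j; rewrite (ord1 i) !mxE.
by case: (a == j); case: (b == j); rewrite ?subrr ?normr0 ?subr0 ?sub0r ?normrN ?normr1.
Qed.

Section ChoiceMap.
Variables (R : realType) (m : nat) (h : 'rV[R]_m -> R) (Q : 'rV[R]_m -> 'rV[R]_m).
Hypothesis Q_choice : is_choice_map h Q.

Lemma choice_map_score_gap y a b d : a != b -> 0 <= d <= Q y ord0 b ->
  d * (y ord0 a - y ord0 b) <= h (mass_shift (Q y) a b d) - h (Q y).
Proof.
move=> ab d_bnd; have [Qy_simplex Qy_opt] := Q_choice y.
have := Qy_opt _ (simplex_mass_shift Qy_simplex ab d_bnd).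
by rewrite inner_mass_shift; lra.
Qed.

Lemma choice_map_score_gap_bounded (x0 : 'rV[R]_m) a b :
  {within simplex (R:=R) (m:=m), continuous h} -> simplex x0 ->
  0 < x0 ord0 b -> a != b ->
  exists2 e : R, 0 < e &
    exists B : R, forall y, `|Q y - x0| < e -> y ord0 a - y ord0 b <= B.
Proof.
move=> h_cont x0_simplex x0b_gt0 ab.
have [r r_gt0 h_near] := within_continuous_dist h_cont x0_simplex ltr01.
pose d := Num.min (x0 ord0 b / 2) (r / 2).
have d_gt0 : 0 < d by rewrite lt_min !divr_gt0.
have d_le_b : d <= x0 ord0 b / 2 by rewrite ge_min lexx.
have d_le_r : d <= r / 2 by rewrite ge_min lexx orbT.
exists d => //; exists (2 / d) => y Qy_near.
have [Qy_simplex _] := Q_choice y.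
have Qyb_ge : d <= Q y ord0 b.
  have := le_lt_trans (ler_entry_mx_norm (Q y - x0) ord0 b) Qy_near.
  rewrite !mxE ltr_norml => /andP[+ _]; lra.
have d_bnd : 0 <= d <= Q y ord0 b by rewrite Qyb_ge ltW.
have h_Qy : `|h x0 - h (Q y)| < 1.
  by apply: h_near => //; rewrite -normrN opprB; lra.
have h_z : `|h x0 - h (mass_shift (Q y) a b d)| < 1.
  apply: h_near; first exact: simplex_mass_shift.
  rewrite -opprB normrN -(subrKA (Q y)) (le_lt_trans (ler_normD _ _)) //.
  have := mx_norm_mass_shift_le (Q y) a b (ltW d_gt0); lra.
have := choice_map_score_gap ab d_bnd.
rewrite ler_pdivlMr // mulrC; move: h_Qy h_z; rewrite !ltr_norml; lra.
Qed.

End ChoiceMap.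

Lemma simplex_inner_lt_gap (R : realType) m (x z v : 'rV[R]_m) :
  simplex x -> simplex z -> inner v x < inner v z ->
  exists a b, 0 < x ord0 b /\ v ord0 b < v ord0 a.
Proof.
move=> x_simplex z_simplex; set u := inner v x => u_lt.
have [a u_lt_a] : exists a, u < v ord0 a.
  apply: contrapT => /forallNP all_le; move: u_lt; apply/negP; rewrite -leNgt.
  rewrite -[leRHS]mulr1 -(proj2 z_simplex) mulr_sumr /inner.
  apply: ler_sum => i _; apply: ler_wpM2r; first exact: simplex_ge0.
  by rewrite leNgt; apply/negP; apply: all_le.
exists a; apply: contrapT => /forallNP no_b; move: u_lt_a; apply/negP; rewrite -leNgt.
rewrite -[leLHS]mulr1 -(proj2 x_simplex) mulr_sumr /inner.
apply: ler_sum => i _; have := simplex_ge0 i x_simplex.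
rewrite le_eqVlt => /orP[/eqP <-|xi_gt0]; first by rewrite !mulr0.
apply: ler_wpM2r; first exact: ltW.
rewrite leNgt; apply/negP => vi_lt.
by apply: (no_b i); split.
Qed.

Section Payoffs.
Variables (R : realType) (I : finType) (n : I -> nat).
Variables (U : I -> pure_profile n -> R) (k : I).

Definition opp_prob (x : profile R n) (s : pure_profile n) : R :=
  \prod_(j | j != k) x j ord0 (s j).

Definition payoff_lip : R := \sum_(s : pure_profile n) `|U k s| *+ #|I|.

Lemma deviate_at (x : profile R n) (xk : 'rV[R]_(n k)) : deviate x xk k = xk.
Proof. by rewrite /deviate dfwithin. Qed.

Lemma deviate_other (x : profile R n) (xk : 'rV[R]_(n k)) j :
  j != k -> deviate x xk j = x j.
Proof. by move=> jk; rewrite /deviate dfwithout // eq_sym. Qed.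

Lemma strat_space_deviate (x : profile R n) (xk : 'rV[R]_(n k)) :
  strat_space x -> simplex xk -> strat_space (deviate x xk).
Proof.
move=> x_strat xk_simplex j; have [->|jk] := eqVneq j k.
  by rewrite deviate_at.
by rewrite deviate_other.
Qed.

Lemma exp_payoff_split (x : profile R n) : exp_payoff U k x =
  \sum_(s : pure_profile n) x k ord0 (s k) * opp_prob x s * U k s.
Proof. by apply: eq_bigr => s _; rewrite (bigD1 k) //= mulrA. Qed.

Lemma opp_prob_deviate (x : profile R n) (xk : 'rV[R]_(n k)) s :
  opp_prob (deviate x xk) s = opp_prob x s.
Proof. by apply: eq_bigr => j jk; rewrite deviate_other. Qed.

Lemma inner_payoff_vec (x : profile R n) (w : 'rV[R]_(n k)) :
  inner (payoff_vec U k x) w =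
  \sum_(s : pure_profile n) w ord0 (s k) * opp_prob x s * U k s.
Proof.
rewrite /inner; under eq_bigr => a _.
  rewrite mulrC mxE exp_payoff_split big_distrr /=.
  under eq_bigr do rewrite opp_prob_deviate deviate_at mxE !mulrA.
  over.
rewrite exchange_big /=; apply: eq_bigr => s _.
rewrite (bigD1 (s k)) //= eqxx mulr1 big1 ?addr0 // => a /negbTE ->.
by rewrite mulr0 !mul0r.
Qed.

Lemma exp_payoff_deviate (x : profile R n) (xk : 'rV[R]_(n k)) :
  exp_payoff U k (deviate x xk) = inner (payoff_vec U k x) xk.
Proof.
rewrite inner_payoff_vec exp_payoff_split.
by apply: eq_bigr => s _; rewrite opp_prob_deviate deviate_at.
Qed.

Lemma exp_payoff_inner (x : profile R n) :
  exp_payoff U k x = inner (payoff_vec U k x) (x k).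
Proof. by rewrite inner_payoff_vec exp_payoff_split. Qed.

Lemma ler_norm_exp_payoffB (x1 x2 : profile R n) (e : R) :
  strat_space x1 -> strat_space x2 -> (forall j, `|x1 j - x2 j| <= e) ->
  `|exp_payoff U k x1 - exp_payoff U k x2| <= e * payoff_lip.
Proof.
move=> x1_strat x2_strat x12_near.
have in01 (x : profile R n) j (i : 'I_(n j)) :
    strat_space x -> 0 <= x j ord0 i <= 1.
  by move=> x_strat; rewrite simplex_ge0 ?simplex_le1.
rewrite /exp_payoff -sumrB /payoff_lip mulr_sumr.
apply: (le_trans (ler_norm_sum _ _ _)); apply: ler_sum => s _.
rewrite -mulrBl normrM mulrnAr -mulrnAl ler_wpM2r //.
apply: (le_trans (ler_norm_prodrB _ (fun j => in01 _ j (s j) x1_strat)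
                                    (fun j => in01 _ j (s j) x2_strat))).
rewrite -sumr_const; apply: ler_sum => j _.
by apply: le_trans (x12_near j); have := ler_entry_mx_norm (x1 j - x2 j) ord0 (s j); rewrite !mxE.
Qed.

Lemma ler_norm_payoff_vecB (x1 x2 : profile R n) (e : R) a : 0 <= e ->
  strat_space x1 -> strat_space x2 -> (forall j, `|x1 j - x2 j| <= e) ->
  `|payoff_vec U k x1 ord0 a - payoff_vec U k x2 ord0 a| <= e * payoff_lip.
Proof.
move=> e_ge0 x1_strat x2_strat x12_near; rewrite !mxE.
apply: ler_norm_exp_payoffB; [exact: strat_space_deviate (simplex_pure_strat _ _) ..|].
move=> j; have [->|jk] := eqVneq j k; first by rewrite !deviate_at subrr normr0.
by rewrite !deviate_other.
Qed.

Lemma payoff_vec_gap_near (xs : profile R n) a b : strat_space xs ->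
  payoff_vec U k xs ord0 b < payoff_vec U k xs ord0 a ->
  exists2 e : R, 0 < e & forall x, strat_space x -> (forall j, `|x j - xs j| < e) ->
    (payoff_vec U k xs ord0 a - payoff_vec U k xs ord0 b) / 2 <=
    payoff_vec U k x ord0 a - payoff_vec U k x ord0 b.
Proof.
move=> xs_strat; rewrite -subr_gt0; set gap := (_ - _) => gap_gt0.
have lip_ge0 : 0 <= payoff_lip.
  by apply: sumr_ge0 => s _; rewrite mulrn_wge0.
pose e := gap / (4 * (payoff_lip + 1)).
have e_gt0 : 0 < e by rewrite divr_gt0 // mulr_gt0 // ltr_wpDl.
have e_lip : e * payoff_lip <= gap / 4.
  have -> : gap / 4 = e * (payoff_lip + 1).
    by rewrite /e; field; rewrite gt_eqF // ltr_wpDl.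
  by rewrite ler_wpM2l ?lerDl // ltW.
exists e => // x x_strat x_near.
have near c : `|payoff_vec U k x ord0 c - payoff_vec U k xs ord0 c| <= gap / 4.
  apply: le_trans e_lip; apply: ler_norm_payoff_vecB => // [|j]; exact: ltW.
move: (near a) (near b); rewrite /gap !ler_norml; lra.
Qed.

End Payoffs.

Theorem proposition5p2 (R : realType) (I : finType) (n : I -> nat)
  (U : I -> pure_profile n -> R)
  (h : forall k : I, 'rV[R]_(n k) -> R)
  (Q : forall k : I, 'rV[R]_(n k) -> 'rV[R]_(n k))
  (Hh : forall k, penalty (h k))
  (HQ : forall k, is_choice_map (h k) (Q k))
  (xs : profile R n) (Hxs : strat_space xs) :
  (forall Uset : set (profile R n),
     (exists2 e : R, 0 < e &
        forall x, strat_space x -> (forall k, `|x k - xs k| < e) -> Uset x) ->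
     exists y : R -> profile R n,
       (forall k, {within [set t : R | 0 <= t], continuous (fun t => y t k)}) /\
       (forall k (t : R), 0 < t ->
          is_derive t 1 (fun s => y s k)
            (payoff_vec U k (fun j => Q j (y t j)))) /\
       (forall t : R, 0 <= t -> Uset (fun j => Q j (y t j)))) ->
  is_Nash U xs.
Proof.
move=> stable; split=> // k xk xk_simplex; rewrite leNgt; apply/negP.
rewrite exp_payoff_deviate exp_payoff_inner => /simplex_inner_lt_gap.
case/(_ (Hxs k) xk_simplex) => a [b [xsb_gt0 pv_ba]].
have ab : a != b by apply: contraTneq pv_ba => ->; rewrite ltxx.
have [e1 e1_gt0 pv_gap] := payoff_vec_gap_near Hxs pv_ba.
have [e2 e2_gt0 [B score_bnd]] :=
  choice_map_score_gap_bounded (HQ k) (proj1 (Hh k)) (Hxs k) xsb_gt0 ab.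
pose e := Num.min e1 e2.
have e_gt0 : 0 < e by rewrite lt_min e1_gt0.
have [y [y_cont [y_der y_near]]] :=
  stable (fun x => strat_space x /\ forall j, `|x j - xs j| < e)
         (ex_intro2 _ _ e e_gt0 (fun x x_strat x_near => conj x_strat x_near)).
pose c := (payoff_vec U k xs ord0 a - payoff_vec U k xs ord0 b) / 2.
have c_gt0 : 0 < c by rewrite divr_gt0 // subr_gt0.
have gap_persists (t : R) : 0 < t ->
    c <= payoff_vec U k (fun j => Q j (y t j)) ord0 a
         - payoff_vec U k (fun j => Q j (y t j)) ord0 b.
  move=> t_gt0; have [x_strat x_near] := y_near t (ltW t_gt0).
  by apply: pv_gap => // j; apply: lt_le_trans (x_near j) _; rewrite ge_min lexx.
have [T T_gt0 gap_gt_B] :=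
  coord_gap_unbounded c_gt0 (y_cont k) (y_der k) gap_persists B.
have QyT_near : `|Q k (y T k) - xs k| < e2.
  have [_ x_near] := y_near T (ltW T_gt0).
  by apply: lt_le_trans (x_near k) _; rewrite ge_min lexx orbT.
by move: (score_bnd _ QyT_near); rewrite leNgt gap_gt_B.
Qed.
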